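(* Let $T\colon\mathscr C\to\mathscr C$ be a homeomorphism of the Cantor set with exactly one fixed point $x^0$ such that for every $x\ne x^0$ and every $m\in\mathbb N$ the set $\{T^{mk}(x):k\in\mathbb Z\}$ is dense in $\mathscr C$. Let $\mathscr C=A\sqcup B$ be a partition into clopen sets with $x^0\in A$. Let $\hat X=A\times\{0,1\}\sqcup B\times\{0\}$ and define $f\colon\hat X\to\hat X$ by $f(x,i)=(T(x),1)$ if $i=0$ and $T(x)\in A$, and $f(x,i)=(T(x),0)$ otherwise. For $x\in\mathscr C$ let $N(x,B)=\min\{k\in\mathbb N_0: T^{-k}(x)\in B\}$ (with $N(x,B)=\infty$ if no such $k$ exists), let $U=\{x\in\mathscr C: N(x,B)<\infty\}$, let $X=\overline{\{(x,N(x,B)\bmod 2):x\in U\}}$ (closure in $\hat X$), and let $\pi\colon\hat X\to\mathscr C$ be $\pi(x,i)=x$. Then $f(X)=X$, and for every $(x,i)\in X\setminus\pi^{-1}(x^0)$, every $m\in\mathbb N$, and every full orbit $(y_k)_{k\in\mathbb Z}$ of $(x,i)$ in $X$ (i.e. $y_k\in X$, $y_0=(x,i)$, $f(y_k)=y_{k+1}$ for all $k$), we have $\overline{\{y_{mk}:k\in\mathbb Z\}}=X$.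
   Context: $\mathscr C$ denotes the Cantor set; $\mathbb N_0=\{0,1,2,\dots\}$. *)

From HB Require Import structures.
From mathcomp Require Import all_boot all_order all_algebra.
From mathcomp Require Import all_classical all_reals all_analysis.
Set Implicit Arguments. Unset Strict Implicit. Unset Printing Implicit Defensive.
Import Order.TTheory GRing.Theory Num.Theory.
Local Open Scope classical_set_scope.

Definition iterz {X : Type} (T Tinv : X -> X) (n : int) (x : X) : X :=
  match n with
  | Posz k => iter k T x
  | Negz k => iter k.+1 Tinv x
  end.

(* The map f on hat X (defined on all of C x bool; hat X is invariant):
   f(x,i) = (T x, 1) if i = 0 and T x \in A, (T x, 0) otherwise. *)
Definition fhat {X : Type} (T : X -> X) (A : set X) (p : X * bool) : X * bool :=
  (T p.1, ~~ p.2 && `[< A (T p.1) >]).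

Definition graphN {X : Type} (Tinv : X -> X) (B : set X) : set (X * bool) :=
  [set p | exists k : nat, B (iter k Tinv p.1) /\
                          (forall j, (j < k)%N -> ~ B (iter j Tinv p.1)) /\
                          p.2 = odd k].

From HB Require Import structures.
From mathcomp Require Import all_boot all_order all_algebra.
From mathcomp Require Import all_classical all_reals all_analysis.
From mathcomp Require Import finmap zify.
Import Order.TTheory GRing.Theory Num.Theory.
Local Open Scope classical_set_scope.

(* Over the open set {N(x,B) < oo}, which is the disjoint union of the open
   sets {N(x,B) = n}, the graph of x |-> N(x,B) mod 2 is locally constant, so
   its closure X has exactly one point above each x with N(x,B) = n, with
   second coordinate odd n.  The map f is continuous and preserves the graph,
   so f(X) is contained in X; and f(X), being compact hence closed, contains the
   graph, because every graph point has an f-preimage in X.  The only delicate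
   preimage is that of (x, 0) with x in B, for which T^-1 x must lie in the
   projection of X, i.e. in the closure of {N < oo}.  This set is dense away
   from x0: otherwise a clopen set V on which N = oo would, by minimality, have
   bounded T^-1-return times, and the points entering V within that bound would
   form a proper clopen T^-1-invariant set, which minimality excludes.
   Finally, the T^m-orbit of any x <> x0 meets every P /\ {N = n}, and at such
   points the orbit (y_k) is forced to have second coordinate odd n. *)

Lemma iter_can {S : Type} (g h : S -> S) n : cancel g h -> cancel (iter n g) (iter n h).
Proof. by move=> gK; elim: n => [|n IH] x //; rewrite iterSr iterS gK IH. Qed.

Lemma iter_can_subn {S : Type} (g h : S -> S) a b x : cancel g h -> (a <= b)%N ->
  iter a h (iter b g x) = iter (b - a) g x.
Proof. by move=> gK ab; rewrite -{1}(subnKC ab) iterD iter_can. Qed.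

Lemma iterzN {S : Type} (T Tinv : S -> S) k x : iterz T Tinv (- k%:Z)%R x = iter k Tinv x.
Proof. by case: k. Qed.

Section Topology.
Context {S : topologicalType}.

Lemma continuous_iter (f : S -> S) n : continuous f -> continuous (iter n f).
Proof.
move=> fc; elim: n => [|n IH] x; first exact: cvg_id.
exact: (continuous_comp (IH x) (fc _)).
Qed.

Lemma clopen_iter_visit {h : S -> S} {V : set S} n : continuous h -> clopen V ->
  clopen [set w | exists k, (k < n)%N /\ V (iter k h w)].
Proof.
move=> hc cV; elim: n => [|n IH].
  by rewrite (_ : [set w | _] = set0); [exact: clopen0 | apply/seteqP; split => // w [k []]].
rewrite (_ : [set w | _] = [set w | exists k, (k < n)%N /\ V (iter k h w)] `|`
                              iter n h @^-1` V).
  by apply: clopenU => //; apply: preimage_clopen => //; exact: continuous_iter.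
apply/seteqP; split => w /=.
  by move=> [k [+ Vk]]; rewrite ltnS leq_eqVlt => /predU1P [<-|kn]; [right | left; exists k].
by case=> [[k [kn Vk]]|Vn]; [exists k; split => //; exact: ltnW | exists n].
Qed.

Lemma image_closure_sub {S' : topologicalType} {h : S -> S'} {E : set S} :
  continuous h -> h @` closure E `<=` closure (h @` E).
Proof.
move=> hc _ [p Ep <-] Q /(hc p) /Ep [w [Ew Qw]].
by exists (h w); split => //; exists w.
Qed.

Lemma hausdorff_prod {S' : topologicalType} :
  hausdorff_space S -> hausdorff_space S' -> hausdorff_space (S * S')%type.
Proof.
move=> hS hS' [p1 p2] [q1 q2] cl.
have nbhsX (x : S) (y : S') P Q : nbhs x P -> nbhs y Q -> nbhs (x, y) (P `*` Q).
  by move=> nP nQ; exists (P, Q).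
congr pair; [apply: hS | apply: hS'] => P Q nP nQ.
- have [[w _] [[/= Pw _] [/= Qw _]]] :=
    cl _ _ (nbhsX _ _ _ setT nP filterT) (nbhsX _ _ _ setT nQ filterT).
  by exists w.
- have [[_ w] [[_ /= Pw] [_ /= Qw]]] :=
    cl _ _ (nbhsX _ _ setT _ filterT nP) (nbhsX _ _ setT _ filterT nQ).
  by exists w.
Qed.

Lemma continuous_pair_bool (g : S -> S) (c : bool -> bool) :
  continuous g -> continuous (fun p : S * bool => (g p.1, c p.2)).
Proof.
move=> gc [z b].
apply: (@cvg_pair _ _ _ (nbhs (z, b)) (nbhs (g z)) (nbhs (c b))).
  by apply: cvg_comp; [exact: cvg_fst | exact: gc].
apply/discrete_cvg; exists (setT, [set b]) => //=; last by move=> [? ?] [_ /= ->].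
by split; [exact: filterT | exact: discrete_set1].
Qed.

Lemma fhat_continuous {T : S -> S} {A : set S} :
  continuous T -> clopen A -> continuous (fhat T A).
Proof.
move=> Tc [oA cA] [z b].
pose a := `[< A (T z) >].
have near_fhat : \forall p \near (z, b), (T p.1, a && ~~ p.2) = fhat T A p.
  have Aa : open_nbhs (T z) [set v | `[< A v >] = a].
    split => //; rewrite /a; case: asboolP => _.
    - by have -> : [set v | `[< A v >] = true] = A by apply/seteqP; split => v /= /asboolP.
    - have -> : [set v | `[< A v >] = false] = ~` A.
        by apply/seteqP; split => v /=; [move/negbT/asboolPn | move/asboolPn/negbTE].
      by rewrite openC.
  exists (T @^-1` [set v | `[< A v >] = a], setT) => /=.
    by split; [exact: (Tc z) (open_nbhs_nbhs Aa) | exact: filterT].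
  by move=> [w c] [/= <- _]; rewrite /fhat andbC.
apply: cvg_trans (near_eq_cvg near_fhat) _.
rewrite [fhat _ _ _](_ : _ = (T z, a && ~~ b)); last by rewrite /fhat andbC.
exact: (@continuous_pair_bool T (fun c => a && ~~ c) Tc (z, b)).
Qed.

End Topology.

Section Compact.
Context {S : ptopologicalType}.
Hypothesis S_compact : compact [set: S].

Lemma compact_backward_orbit {g ginv : S -> S} {Q : set S} {q0} :
  cancel g ginv -> continuous ginv -> closed Q -> Q q0 -> (forall w, Q w -> Q (g w)) ->
  exists q, forall n, Q (iter n ginv q).
Proof.
move=> gK ginvc cQ Qq0 gQ; apply: contrapT => /forallNP noq.
have cover_Q : [set: S] `<=` cover [set: nat] (fun n => iter n ginv @^-1` (~` Q)).
  by move=> q _; have /existsNP [n Qn] := noq q; exists n.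
have open_cover : forall n, [set: nat] n -> open (iter n ginv @^-1` (~` Q)).
  by move=> n _; apply: open_comp => [? _|]; [exact: continuous_iter | rewrite openC].
move: (S_compact); rewrite compact_cover => /(_ _ _ _ open_cover cover_Q) [D _ sub_D].
have gnQ n q : Q q -> Q (iter n g q) by elim: n q => //= n IH q /IH; exact: gQ.
have [n nD] := sub_D (iter (\max_(i <- D) i) g q0) I; apply.
by rewrite /= iter_can_subn //; [exact: gnQ | exact: leq_bigmax_seq].
Qed.

Lemma bounded_return_time {h : S -> S} {V : set S} :
  continuous h -> clopen V ->
  (forall v, V v -> exists k, (0 < k)%N /\ V (iter k h v)) ->
  exists R, forall v, V v -> exists k, [/\ (0 < k)%N, (k <= R)%N & V (iter k h v)].
Proof.
move=> hc [oV cV] ret.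
have cover_V : V `<=` cover [set k | (0 < k)%N] (fun n => iter n h @^-1` V).
  by move=> v /ret [k [k0 Vk]]; exists k.
have open_cover : forall n, [set k | (0 < k)%N] n -> open (iter n h @^-1` V).
  by move=> n _; apply: open_comp => // ? _; exact: continuous_iter.
have := subclosed_compact cV S_compact (@subsetT _ V).
rewrite compact_cover => /(_ _ _ _ open_cover cover_V) [D sD sub_D].
exists (\max_(i <- D) i) => v /sub_D [n nD Vn]; exists n; split => //.
  by move/sD: nD; rewrite in_setE.
exact: leq_bigmax_seq.
Qed.

End Compact.

Lemma cantor_clopen_nbhs (u : cantor_space) (P : set cantor_space) :
  nbhs u P -> exists V, [/\ clopen V, V u & V `<=` P].
Proof.
move/(zero_dimensional_cvg cantor_space_hausdorff cantor_zero_dimensional cantor_space_compact).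
by case=> V [Vu cV] VP; exists V.
Qed.

Section DoubleCover.
Context {x0 : cantor_space}.
Variables (T Tinv : cantor_space -> cantor_space).
Hypotheses (TK : cancel T Tinv) (TinvK : cancel Tinv T).
Hypotheses (T_cont : continuous T) (Tinv_cont : continuous Tinv).
Hypothesis Tx0 : T x0 = x0.
Hypothesis T_minimal : forall x, x <> x0 -> forall m : nat, (0 < m)%N ->
  closure [set iterz T Tinv (m%:Z * k)%R x | k in [set: int]] = [set: cantor_space].
Variables A B : set cantor_space.
Hypotheses (A_clopen : clopen A) (B_clopen : clopen B).
Hypotheses (AB0 : A `&` B = set0) (AUB : A `|` B = [set: cantor_space]) (Ax0 : A x0).

Lemma Tinv_x0 : Tinv x0 = x0.
Proof. by rewrite -{1}Tx0 TK. Qed.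

Lemma A_notB {w} : A w -> ~ B w.
Proof. by move=> Aw Bw; have : (A `&` B) w by []; rewrite AB0. Qed.

Lemma A_or_B w : A w \/ B w.
Proof. by have : (A `|` B) w by rewrite AUB. Qed.

Lemma dense_orbit_mul m {x} {V : set cantor_space} {v} : x <> x0 -> (0 < m)%N ->
  open V -> V v -> exists n, V (iter (m * n) T x) \/ V (iter (m * n) Tinv x).
Proof.
move=> x_x0 m0 oV Vv.
have : closure [set iterz T Tinv (m%:Z * k)%R x | k in [set: int]] v by rewrite T_minimal.
case/(_ V (open_nbhs_nbhs (conj oV Vv))) => _ [[[] n _ <-] Vn].
  by exists n; left; rewrite -PoszM in Vn.
by exists n.+1; right; rewrite NegzE mulrN -PoszM iterzN in Vn.
Qed.

Lemma closed_orbit_full {Q : set cantor_space} {q} : q <> x0 -> closed Q ->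
  (forall n, Q (iter n T q)) -> (forall n, Q (iter n Tinv q)) -> forall w, Q w.
Proof.
move=> q_x0 cQ Tq Tinvq w; apply: contrapT => nQw.
have [n] := dense_orbit_mul 1 q_x0 isT (closed_openC cQ) nQw.
by rewrite mul1n => -[]; apply.
Qed.

Lemma clopen_Tinv_invariant_trivial {Y : set cantor_space} {y1 y2} : clopen Y ->
  (forall w, Y w -> Y (Tinv w)) -> Y y1 -> ~ Y y2 -> False.
Proof.
(* A full orbit of a point other than x0 is dense, so it cannot stay inside
   whichever of Y and ~` Y misses x0. *)
move=> [oY cY] YTinv Yy1 nYy2; have [Yx0|nYx0] := pselect (Y x0).
- have nYT w : ~ Y w -> ~ Y (T w) by move=> nYw /YTinv; rewrite TK.
  have [q nYq] := compact_backward_orbit cantor_space_compact TK Tinv_cont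
    (open_closedC oY) nYy2 nYT.
  have q_x0 : q <> x0 by move=> qx0; apply: (nYq 0%N); rewrite /= qx0.
  have nYTq n : ~ Y (iter n T q) by elim: n => [|n IH] /=; [exact: (nYq 0%N) | exact: nYT].
  exact: (closed_orbit_full (Q := ~` Y)) q_x0 (open_closedC oY) nYTq nYq y1 Yy1.
- have [q Yq] := compact_backward_orbit cantor_space_compact TinvK T_cont cY Yy1 YTinv.
  have q_x0 : q <> x0 by move=> qx0; apply: nYx0; rewrite -qx0; exact: (Yq 0%N).
  have YTinvq n : Y (iter n Tinv q) by elim: n => [|n IH] /=; [exact: (Yq 0%N) | exact: YTinv].
  exact: nYy2 (closed_orbit_full q_x0 cY Yq YTinvq y2).
Qed.

Definition finiteN := [set w | exists k, B (iter k Tinv w)].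

Lemma finiteN_eventually {w} : w <> x0 -> (exists b, B b) ->
  exists M, forall n, (M <= n)%N -> finiteN (iter n T w).
Proof.
move=> w_x0 [b Bb]; have [n] := dense_orbit_mul 1 w_x0 isT B_clopen.1 Bb.
rewrite mul1n => -[BTn|BTinvn].
- by exists n => k nk; exists (k - n)%N; rewrite iter_can_subn ?leq_subr // subKn.
- by exists 0%N => k _; exists (n + k)%N; rewrite iterD iter_can.
Qed.

Lemma clopen_outside_finiteN_return {V : set cantor_space} :
  clopen V -> V `<=` ~` finiteN -> (exists b, B b) ->
  forall v, V v -> exists k, (0 < k)%N /\ V (iter k Tinv v).
Proof.
move=> [oV _] Vinf exB v Vv; have [vx0|v_x0] := pselect (v = x0).
  by exists 1%N; split => //=; rewrite vx0 Tinv_x0 -vx0.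
have [M finM] := finiteN_eventually v_x0 exB.
have [_ perfect] := cantor_perfect.
have : limit_point setT v by rewrite perfect.
case/(_ V (open_nbhs_nbhs (conj oV Vv))) => y [yv _ Vy].
have oVv : open (V `&` ~` [set v]).
  apply: openI => //; rewrite openC.
  exact: accessible_closed_set1 (hausdorff_accessible cantor_space_hausdorff) v.
(* The forward orbit of v leaves V for good after time M, so the dense
   T^(M+1)-orbit of v must come back to V \ {v} through negative times. *)
have [[|n] [[VTn nTn]|[VTinvn nTinvn]]] :=
  dense_orbit_mul M.+1 v_x0 isT oVv (conj Vy (elimN eqP yv)).
- by case: nTn; rewrite muln0.
- by case: nTinvn; rewrite muln0.
- by case: (Vinf _ VTn); apply: finM; exact: ltnW (leq_pmulr _ _).
- by exists (M.+1 * n.+1)%N.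
Qed.

Lemma closure_finiteN {u} : u <> x0 -> (exists b, B b) -> closure finiteN u.
Proof.
move=> u_x0 exB; apply: contrapT => nUu.
have : (~` closure finiteN) u := nUu.
rewrite -interiorC => /cantor_clopen_nbhs [V [cV Vu Vinf]].
have [R retR] := bounded_return_time cantor_space_compact Tinv_cont cV
  (clopen_outside_finiteN_return cV Vinf exB).
pose Y := [set w | exists k, (k < R)%N /\ V (iter k Tinv w)].
have Yu : Y u by have [k [k0 kR _]] := retR u Vu; exists 0%N; split => //; exact: leq_trans k0 kR.
have [M finM] := finiteN_eventually u_x0 exB.
have nYTu : ~ Y (iter (M + R) T u).
  move=> [k [kR]]; rewrite iter_can_subn //; last lia.
  by move=> Vk; apply: (Vinf _ Vk); apply: finM; lia.
apply: (clopen_Tinv_invariant_trivial (clopen_iter_visit R Tinv_cont cV) _ Yu nYTu).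
move=> w [[|k] [kR Vk]].
  have [j [j0 jR Vj]] := retR w Vk.
  by exists j.-1; rewrite -iterSr prednK //; split => //; lia.
by exists k; rewrite -iterSr; split => //; exact: ltnW.
Qed.

Definition first_hit n :=
  [set w | B (iter n Tinv w) /\ forall j, (j < n)%N -> ~ B (iter j Tinv w)].

Lemma open_first_hit n : open (first_hit n).
Proof.
rewrite (_ : first_hit n =
  iter n Tinv @^-1` B `&` ~` [set w | exists k, (k < n)%N /\ B (iter k Tinv w)]).
  apply: openI; first by apply: open_comp B_clopen.1 => w _; exact: continuous_iter.
  by apply: closed_openC; case: (clopen_iter_visit n Tinv_cont B_clopen).
apply/seteqP; split => w /= [Bn nB]; split => //.
- by move=> [j [/nB]].
- by move=> j jn Bj; apply: nB; exists j.
Qed.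

Lemma first_hit_uniq {n k w} : first_hit n w -> first_hit k w -> k = n.
Proof.
move=> [Bn nB] [Bk kB]; apply/eqP; rewrite eqn_leq.
by apply/andP; split; rewrite leqNgt; apply/negP => lt; [apply: kB lt Bn | apply: nB lt Bk].
Qed.

Local Notation G := (graphN Tinv B).

Lemma finiteN_graphN w : finiteN w -> exists b, G (w, b).
Proof.
move=> [k0 Bk0]; have exk : exists k, `[< B (iter k Tinv w) >] by exists k0; exact/asboolP.
case: (ex_minnP exk) => k /asboolP Bk kmin; exists (odd k), k; split => //; split => // j jk Bj.
by have := kmin j (asboolT Bj); rewrite leqNgt jk.
Qed.

Lemma closure_graphN_first_hit {n u} i : first_hit n u -> closure G (u, i) -> i = odd n.
Proof.
move=> hit_u /(_ (first_hit n `*` [set i])) [].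
  exists (first_hit n, [set i]) => //=; split; last exact: discrete_set1.
  exact: open_nbhs_nbhs (conj (open_first_hit n) hit_u).
move=> [w j] [[k [Bk [nk /= ->]]] [hit_w /= <-]].
by rewrite (first_hit_uniq hit_w (conj Bk nk)).
Qed.

Lemma fhat_graphN p : G p -> G (fhat T A p).
Proof.
case: p => w b [k [Bk [nk /= ->]]]; have [ATw|BTw] := A_or_B (T w).
- exists k.+1; split; first by rewrite iterSr /= TK.
  split; last by rewrite /fhat /= (asboolT ATw) andbT.
  by case=> [_ /(A_notB ATw)|j]; rewrite // ltnS iterSr /= TK; exact: nk.
- exists 0%N; split => //; split => //.
  by rewrite /fhat /= (asboolF (fun ATw => A_notB ATw BTw)) andbF.
Qed.

Lemma closed_image_closure_graphN {S : topologicalType} (h : cantor_space * bool -> S) :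
  hausdorff_space S -> continuous h -> closed (h @` closure G).
Proof.
move=> hS hc; apply: compact_closed hS _.
apply: continuous_compact; first exact: continuous_subspaceT.
apply: (@subclosed_compact _ _ [set: cantor_space * bool]) => //; first exact: closed_closure.
by rewrite -setXTT; exact: compact_setX cantor_space_compact bool_compact.
Qed.

Lemma closure_finiteN_sub_fst : closure finiteN `<=` fst @` closure G.
Proof.
rewrite {1}closureE; apply: smallest_sub.
  by apply: (closed_image_closure_graphN fst cantor_space_hausdorff) => -[w b]; exact: cvg_fst.
move=> w /finiteN_graphN [b Gwb].
by exists (w, b) => //; exact: subset_closure.
Qed.

Lemma graphN_sub_fhat_image : G `<=` fhat T A @` closure G.
Proof.
move=> [z b] [k [/= Bk [/= nk ->]]]; case: k Bk nk => [|k] Bk nk.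
- have Tinvz_x0 : Tinv z <> x0.
    by move=> Tinvz; apply: (A_notB Ax0); rewrite -Tx0 -Tinvz TinvK.
  have [[w i] Xwi /= wz] := closure_finiteN_sub_fst _ (closure_finiteN Tinvz_x0 (ex_intro _ z Bk)).
  exists (w, i) => //; rewrite /fhat /= wz TinvK (asboolF (fun Az => A_notB Az Bk)).
  by rewrite andbF.
- have Az : A z by case: (A_or_B z) => // Bz; case: (nk 0%N isT).
  exists (Tinv z, odd k); last by rewrite /fhat /= TinvK (asboolT Az) andbT.
  apply: subset_closure; exists k; rewrite -!iterSr; split => //; split => // j jk.
  by rewrite -iterSr; exact: nk.
Qed.

Lemma fhat_closure_graphN : fhat T A @` closure G = closure G.
Proof.
apply/seteqP; split.
  apply: (subset_trans (image_closure_sub (fhat_continuous T_cont A_clopen))).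
  by apply: closureS => _ [p Gp <-]; exact: fhat_graphN.
rewrite {1}closureE; apply: smallest_sub graphN_sub_fhat_image.
apply: closed_image_closure_graphN _ (fhat_continuous T_cont A_clopen).
exact: hausdorff_prod cantor_space_hausdorff discrete_hausdorff.
Qed.

Section FullOrbit.
Variable y : int -> cantor_space * bool.
Hypothesis fhat_y : forall k, fhat T A (y k) = y (k + 1)%R.

Lemma orbit_fst_iter n : (y n%:Z%R).1 = iter n T (y 0%R).1.
Proof. by elim: n => [|n IH] //; rewrite -addn1 PoszD -fhat_y /= IH addn1. Qed.

Lemma orbit_fst_iter_inv n : (y (- n%:Z)%R).1 = iter n Tinv (y 0%R).1.
Proof.
elim: n => [|n IH] //; rewrite iterS -IH.
have -> : (- n%:Z = - n.+1%:Z + 1)%R by rewrite -addn1 PoszD opprD addrNK.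
by rewrite -fhat_y /= TK.
Qed.

End FullOrbit.

Lemma closure_graphN_orbit_dense (p : cantor_space * bool) : closure G p -> p.1 <> x0 ->
  forall m : nat, (0 < m)%N ->
  forall y : int -> cantor_space * bool,
    (forall k, closure G (y k)) -> y 0%R = p -> (forall k, fhat T A (y k) = y (k + 1)%R) ->
    closure [set y (m%:Z * k)%R | k in [set: int]] = closure G.
Proof.
move=> Xp p_x0 m m0 y Xy y0 fhat_y; apply/seteqP; split.
  rewrite {1}closureE; apply: smallest_sub; first exact: closed_closure.
  by move=> _ [k _ <-]; exact: Xy.
rewrite {1}closureE; apply: smallest_sub; first exact: closed_closure.
move=> -[z b] [k [/= Bk [/= nk ->]]] Q [[P1 P2] /= [nP1 nP2] P12Q].
have oV : open (P1° `&` first_hit k).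
  by apply: openI; [exact: open_interior | exact: open_first_hit].
have orbit_Q j : (P1° `&` first_hit k) (y j).1 -> Q (y j).
  move=> [P1j hit_j]; apply: P12Q; split; first exact: interior_subset.
  have := closure_graphN_first_hit (y j).2 hit_j; rewrite -surjective_pairing => /(_ (Xy j)) ->.
  exact: nbhs_singleton.
have [n [Tn|Tinvn]] := dense_orbit_mul m p_x0 m0 oV (conj nP1 (conj Bk nk)).
- exists (y (m%:Z * n%:Z)%R); split; first by exists n%:Z%R.
  by apply: orbit_Q; rewrite -PoszM orbit_fst_iter // y0.
- exists (y (m%:Z * - n%:Z)%R); split; first by exists (- n%:Z)%R.
  by apply: orbit_Q; rewrite mulrN -PoszM orbit_fst_iter_inv // y0.
Qed.

End DoubleCover.

Theorem lemma7p3
  (T Tinv : cantor_space -> cantor_space)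
  (hTK : cancel T Tinv) (hTinvK : cancel Tinv T)
  (hT : continuous T) (hTinv : continuous Tinv)
  (x0 : cantor_space)
  (hfix : T x0 = x0) (hfix_uniq : forall x, T x = x -> x = x0)
  (hmin : forall x, x <> x0 -> forall m : nat, (0 < m)%N ->
          closure [set iterz T Tinv (m%:Z * k)%R x | k in [set: int]] = [set: cantor_space])
  (A B : set cantor_space)
  (hA : clopen A) (hB : clopen B)
  (hAB : A `&` B = set0) (hAUB : A `|` B = [set: cantor_space])
  (hx0 : A x0) :
  let X := closure (graphN Tinv B) in
  fhat T A @` X = X /\
  (forall (p : cantor_space * bool), X p -> p.1 <> x0 ->
   forall m : nat, (0 < m)%N ->
   forall y : int -> cantor_space * bool,
     (forall k, X (y k)) -> y 0%R = p -> (forall k, fhat T A (y k) = y (k + 1)%R) ->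
     closure [set y (m%:Z * k)%R | k in [set: int]] = X).
Proof.
move=> X; split; first exact: (fhat_closure_graphN (x0 := x0)).
exact: (closure_graphN_orbit_dense (x0 := x0)).
Qed.
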